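(* Let $m\ge1$, $q=2^m$, $n=3$, and let $L(x)=ax+bx^q+cx^{q^2}$ with $a,b,c\in\mathbb F_{q^3}$ and $L(1)=0$. Then \[|\ker\mathrm{Tr}\cap\ker L^\prime|=\begin{cases}1&\text{if }\mathrm{Tr}(a^{q+1}+a^qb+b^{q+1})\ne0,\\ q^2&\text{if }a+b^{q^2}=a+c^q=0,\\ q&\text{otherwise}.\end{cases}\]
   Context: $\mathrm{Tr}(x)=x+x^q+x^{q^2}$ is the trace map of $\mathbb F_{q^3}$ over $\mathbb F_q$. For a $2$-linear polynomial $L(x)=\sum_j a_jx^{2^j}$ over $\mathbb F_{q^3}$, its adjoint is $L^\prime(x)=\sum_j(a_jx)^{2^{-j}}$, where $y\mapsto y^{2^{-j}}$ is the inverse of $y\mapsto y^{2^j}$ on $\mathbb F_{q^3}$; here $L'(x)=ax+(bx)^{q^2}+(cx)^{q}$. $\ker$ denotes the kernel of an additive map on $\mathbb F_{q^3}$. *)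

From HB Require Import structures.
From mathcomp Require Import all_boot all_order all_algebra all_field.
Set Implicit Arguments. Unset Strict Implicit. Unset Printing Implicit Defensive.
Import GRing.Theory.
Local Open Scope ring_scope.

(* F plays the role of F_{q^3}, q = 2^m (imposed by #|F| = 2^(3m) in the theorem). *)
Definition Tr (F : finFieldType) (q : nat) (x : F) : F :=
  x + x ^+ q + x ^+ (q ^ 2)%N.

Definition Ladj (F : finFieldType) (q : nat) (a b c x : F) : F :=
  a * x + (b * x) ^+ (q ^ 2)%N + (c * x) ^+ q.

Definition Lpoly (F : finFieldType) (q : nat) (a b c x : F) : F :=
  a * x + b * x ^+ q + c * x ^+ (q ^ 2)%N.

From HB Require Import structures.
From mathcomp Require Import all_boot all_order all_algebra all_field.
From mathcomp Require Import ring zify.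
Import GRing.Theory.
Local Open Scope ring_scope.

(* Write A = a + b^(q^2) and B = b^(q^2) + c^q, where c = a + b in characteristic
   2. On ker Tr one has x^(q^2) = x + x^q, so L'(x) = A x + B x^q there, and the
   trace in the statement equals B^(q+1) + A B^q + A^(q+1). If A = B = 0 the set
   is ker Tr, of size q^2. Otherwise this form, times x, vanishes on the set, so
   the set is {0} unless the form is 0; in that case B <> 0 and the set is
   {x | x^q = l x} with l = A/B of norm 1. That set has at most q elements (roots
   of a polynomial of degree q) and at least q, since it contains the image of
   the Hilbert 90 map, whose kernel has at most q^2 elements. *)

Lemma card_le_of_roots (R : finIdomainType) (S : {set R}) (n : nat) (r : {poly R}) :
  (size r <= n)%N -> {in S, forall x, root ('X^n + r) x} -> (#|S| <= n)%N.
Proof.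
move=> size_r rootS.
have size_p : size ('X^n + r) = n.+1 by rewrite size_polyDl size_polyXn.
have p_neq0 : 'X^n + r != 0 by rewrite -size_poly_eq0 size_p.
rewrite -ltnS -size_p cardE; apply: max_poly_roots p_neq0 _ (enum_uniq _).
by apply/allP => x; rewrite mem_enum; apply: rootS.
Qed.

Lemma card_le_ker_mul_img {G H : finZmodType} {f : G -> H} {I : {set H}} :
  {morph f : x y / x - y} -> (forall x, f x \in I) ->
  (#|G| <= #|[set x | f x == 0%R]| * #|I|)%N.
Proof.
move=> fB fI.
pose pre y := odflt 0 [pick z | f z == y].
have f_pre x : f (pre (f x)) = f x.
  by rewrite /pre; case: pickP => [z /eqP //|/(_ x)]; rewrite eqxx.
pose h x := (x - pre (f x), f x).
have h_inj : injective h by move=> x y [+ fxy]; rewrite fxy => /addIr.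
rewrite -cardsX -cardsT -(card_imset _ h_inj).
apply: subset_leq_card; apply/subsetP => _ /imsetP [x _ ->].
by rewrite !inE fB f_pre subrr eqxx fI.
Qed.

Section FieldOfOrderQCubed.
Context {F : finFieldType} {m : nat}.
Hypotheses (m_gt0 : (0 < m)%N) (cardF : #|F| = (2 ^ (3 * m))%N).
Local Notation q := (2 ^ m)%N.

Lemma pchar2_F : 2%N \in [pchar F].
Proof. exact: (card_finPcharP cardF). Qed.

Lemma q_gt1 : (1 < q)%N.
Proof. by rewrite -{1}(expn0 2) ltn_exp2l. Qed.

Lemma cardF_q : #|F| = (q ^ 2 * q)%N.
Proof. by rewrite cardF -expnM -expnD; congr expn; ring. Qed.

Lemma frobD (x y : F) : (x + y) ^+ q = x ^+ q + y ^+ q.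
Proof.
apply: exprDn_pchar; rewrite (eq_pnat _ (pcharf_eq pchar2_F)) pnatX.
by rewrite pnat_id.
Qed.

Lemma frobB (x y : F) : (x - y) ^+ q = x ^+ q - y ^+ q.
Proof. by rewrite !(oppr_pchar2 pchar2_F) frobD. Qed.

Lemma frob_eq0 (x : F) : (x ^+ q == 0) = (x == 0).
Proof. by rewrite expf_eq0 expn_gt0. Qed.

Lemma frob0 : (0 : F) ^+ q = 0.
Proof. by apply/eqP; rewrite frob_eq0. Qed.

Lemma frob3 (x : F) : x ^+ q ^+ q ^+ q = x.
Proof.
rewrite -!exprM -[RHS]expf_card cardF -!expnD; congr (_ ^+ (2 ^ _)); ring.
Qed.

Lemma expr_q2 (x : F) : x ^+ (q ^ 2)%N = x ^+ q ^+ q.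
Proof. by rewrite -exprM mulnn. Qed.

Lemma TrE (x : F) : Tr q x = x + x ^+ q + x ^+ q ^+ q.
Proof. by rewrite /Tr expr_q2. Qed.

Lemma TrB (x y : F) : Tr q (x - y) = Tr q x - Tr q y.
Proof. by rewrite !TrE !frobB; ring. Qed.

Lemma Tr_frob (x : F) : Tr q x ^+ q = Tr q x.
Proof. by rewrite !TrE !frobD frob3; ring. Qed.

Lemma kerTr_frob2 (x : F) : Tr q x = 0 -> x ^+ q ^+ q = x + x ^+ q.
Proof.
rewrite TrE => /eqP.
by rewrite (addr_eq0 _ (_ ^+ q ^+ q)) (oppr_pchar2 pchar2_F) => /eqP.
Qed.

Definition frob_eigen (l : F) := [set x : F | x ^+ q == l * x].

Lemma card_frob_eigen_le (l : F) : (#|frob_eigen l| <= q)%N.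
Proof.
apply: (@card_le_of_roots _ _ _ (- (l *: 'X))).
  by rewrite size_polyN (leq_trans (size_scale_leq _ _)) // size_polyX q_gt1.
move=> x; rewrite inE => /eqP x_eigen.
by rewrite /root hornerD hornerN hornerZ hornerXn hornerX x_eigen subrr.
Qed.

Lemma card_kerTr : #|[set x : F | Tr q x == 0]| = (q ^ 2)%N.
Proof.
have q_le_q2 : (q.+1 <= q ^ 2)%N by have := q_gt1; nia.
apply/eqP; rewrite eqn_leq; apply/andP; split.
  apply: (@card_le_of_roots _ _ _ ('X^q + 'X)).
    rewrite (leq_trans (size_polyD _ _)) // size_polyXn size_polyX.
    by have := q_gt1; nia.
  move=> x; rewrite inE => /eqP Tr_x.
  rewrite /root !(hornerD, hornerXn, hornerX) expr_q2 -Tr_x TrE.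
  by apply/eqP; ring.
have TrF_q x : Tr q x \in frob_eigen 1 by rewrite inE mul1r Tr_frob.
have := card_le_ker_mul_img TrB TrF_q.
move/leq_trans/(_ (leq_mul (leqnn _) (card_frob_eigen_le 1))).
by rewrite cardF_q leq_pmul2r // ltnW // q_gt1.
Qed.

Definition frob_norm (l : F) := l * l ^+ q * l ^+ q ^+ q.

(* The F_q-linear map from the usual proof of Hilbert's Theorem 90. *)
Definition hilbert90 (l y : F) :=
  y ^+ q ^+ q + l ^+ q ^+ q * y ^+ q + l ^+ q ^+ q * l ^+ q * y.

Lemma hilbert90_frob (l y : F) :
  frob_norm l = 1 -> hilbert90 l y ^+ q = l * hilbert90 l y.
Proof.
move=> norm_l.
transitivity (l * hilbert90 l y + (1 - frob_norm l) * y).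
  by rewrite /hilbert90 /frob_norm !frobD !exprMn !frob3; ring.
by rewrite norm_l subrr mul0r addr0.
Qed.

Lemma card_frob_eigen (l : F) : frob_norm l = 1 -> #|frob_eigen l| = q.
Proof.
move=> norm_l; apply/eqP; rewrite eqn_leq card_frob_eigen_le /=.
have h90B : {morph hilbert90 l : y z / y - z}.
  by move=> y z; rewrite /hilbert90 !frobB; ring.
have h90_eigen y : hilbert90 l y \in frob_eigen l.
  by rewrite inE hilbert90_frob.
have ker_le : (#|[set y | hilbert90 l y == 0%R]| <= q ^ 2)%N.
  pose r := l ^+ q ^+ q *: 'X^q + (l ^+ q ^+ q * l ^+ q) *: 'X.
  apply: (@card_le_of_roots _ _ _ r).
    rewrite (leq_trans (size_polyD _ _)) // geq_max.
    rewrite !(leq_trans (size_scale_leq _ _)) // ?size_polyXn ?size_polyX;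
      by have := q_gt1; nia.
  move=> y; rewrite inE => /eqP h90_y.
  rewrite /root !(hornerD, hornerZ, hornerXn, hornerX) expr_q2 -h90_y.
  by rewrite /hilbert90; apply/eqP; ring.
have := card_le_ker_mul_img h90B h90_eigen.
move/leq_trans/(_ (leq_mul ker_le (leqnn _))).
by rewrite cardF_q leq_pmul2l // !expn_gt0.
Qed.

Lemma frob_norm_eq1 (l : F) : 1 + l + l * l ^+ q = 0 -> frob_norm l = 1.
Proof.
move=> l_root.
have l_root_q : 1 + l ^+ q + l ^+ q * l ^+ q ^+ q = 0.
  by move/eqP: l_root; rewrite -frob_eq0 !frobD expr1n exprMn => /eqP.
transitivity ((1 + l + l * l ^+ q) + l * (1 + l ^+ q + l ^+ q * l ^+ q ^+ q) - 1
              - 2%:R * (l + l * l ^+ q)).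
  by rewrite /frob_norm; ring.
rewrite l_root l_root_q (pcharf0 pchar2_F) mulr0 mul0r !add0r subr0.
by rewrite (oppr_pchar2 pchar2_F).
Qed.

Definition kerTr_adj (A B : F) :=
  [set x : F | (Tr q x == 0) && (A * x + B * x ^+ q == 0)].

Definition trace_form (A B : F) := B * B ^+ q + A * B ^+ q + A * A ^+ q.

Lemma trace_form_mul_kerTr_adj (A B x : F) :
  x \in kerTr_adj A B -> trace_form A B * x = 0.
Proof.
rewrite inE (addr_eq0 (A * x)) (oppr_pchar2 pchar2_F).
move=> /andP [/eqP/kerTr_frob2 x_q2 /eqP x_q].
have x_q' : A ^+ q * x ^+ q = B ^+ q * (x + x ^+ q).
  by rewrite -x_q2 -!exprMn x_q.
(* The second bracket is the defining equation of the set, the first its q-th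
   power rewritten with x^(q^2) = x + x^q; the last term has coefficient 2. *)
transitivity (B * (B ^+ q * (x + x ^+ q) - A ^+ q * x ^+ q)
   + (A ^+ q - B ^+ q) * (B * x ^+ q - A * x) + 2%:R * (A * A ^+ q * x)).
  by rewrite /trace_form; ring.
by rewrite x_q' x_q !subrr (pcharf0 pchar2_F) !mulr0 mul0r !addr0.
Qed.

Lemma frob_root_div (A B : F) :
  B != 0 -> trace_form A B = 0 -> 1 + A / B + A / B * (A / B) ^+ q = 0.
Proof.
move=> B_neq0 P_eq0; have Bq_neq0 : B ^+ q != 0 by rewrite frob_eq0.
apply: (mulfI (mulf_neq0 B_neq0 Bq_neq0)).
by rewrite mulr0 -P_eq0 /trace_form exprMn exprVn; field; rewrite B_neq0 Bq_neq0.
Qed.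

Lemma kerTr_adj_eigen (A B : F) :
  B != 0 -> trace_form A B = 0 -> kerTr_adj A B = frob_eigen (A / B).
Proof.
move=> B_neq0 P_eq0; apply/setP => x; rewrite !inE.
have adj_eigen : (A * x + B * x ^+ q == 0) = (x ^+ q == A / B * x).
  have -> : A * x + B * x ^+ q = B * (x ^+ q + A / B * x) by field.
  by rewrite mulf_eq0 (negbTE B_neq0) addr_eq0 (oppr_pchar2 pchar2_F).
rewrite adj_eigen andb_idl // => /eqP x_eigen.
apply/eqP; rewrite TrE x_eigen exprMn x_eigen.
by rewrite -[RHS](mul0r x) -(frob_root_div _ _ B_neq0 P_eq0); ring.
Qed.

Lemma card_kerTr_adj (A B : F) :
  #|kerTr_adj A B| =
    if trace_form A B != 0 then 1%N
    else if (A == 0) && (B == 0) then (q ^ 2)%N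
    else q.
Proof.
have [P_eq0 | P_neq0] := eqVneq (trace_form A B) 0; rewrite /=; last first.
  suff -> : kerTr_adj A B = [set 0] by rewrite cards1.
  apply/setP => x; rewrite in_set1.
  apply/idP/eqP => [/trace_form_mul_kerTr_adj/eqP | ->].
    by rewrite mulf_eq0 (negbTE P_neq0) => /eqP.
  by rewrite inE TrE !frob0 !mulr0 !addr0 eqxx.
have [B_eq0 | B_neq0] := eqVneq B 0.
  have A_eq0 : A = 0.
    move/eqP: P_eq0; rewrite /trace_form B_eq0 frob0 !mulr0 !add0r.
    by rewrite mulf_eq0 frob_eq0 orbb => /eqP.
  rewrite A_eq0 B_eq0 eqxx -card_kerTr; apply: eq_card => x.
  by rewrite !inE !mul0r addr0 eqxx andbT.
rewrite andbF kerTr_adj_eigen // card_frob_eigen //.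
exact/frob_norm_eq1/frob_root_div.
Qed.

Lemma Lpoly1_eq0 (a b c : F) : Lpoly q a b c 1 = 0 -> c = a + b.
Proof.
rewrite /Lpoly !expr1n !mulr1 => /eqP.
by rewrite addr_eq0 (oppr_pchar2 pchar2_F) => /eqP.
Qed.

Lemma kerTr_Ladj (a b : F) :
  [set x | (Tr q x == 0) && (Ladj q a b (a + b) x == 0)] =
    kerTr_adj (a + b ^+ q ^+ q) (b ^+ q ^+ q + (a + b) ^+ q).
Proof.
apply/setP => x; rewrite !inE; apply: andb_id2l => /eqP/kerTr_frob2 x_q2.
by rewrite /Ladj expr_q2 !exprMn x_q2; congr (_ == 0); ring.
Qed.

Lemma Tr_quadratic (a b : F) :
  Tr q (a ^+ q.+1 + a ^+ q * b + b ^+ q.+1) =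
    trace_form (a + b ^+ q ^+ q) (b ^+ q ^+ q + (a + b) ^+ q).
Proof.
transitivity (trace_form (a + b ^+ q ^+ q) (b ^+ q ^+ q + (a + b) ^+ q)
  - 2%:R * (b * b ^+ q ^+ q + a ^+ q ^+ q * b ^+ q ^+ q + b ^+ q ^+ q * b ^+ q ^+ q
            + a ^+ q * b ^+ q ^+ q + a * b)).
  by rewrite TrE /trace_form !exprS !frobD !exprMn !frob3; ring.
by rewrite (pcharf0 pchar2_F) mul0r subr0.
Qed.

Lemma Ladj_coef_eq0 (a b : F) :
  (a + b ^+ (q ^ 2)%N == 0) && (a + (a + b) ^+ q == 0) =
    (a + b ^+ q ^+ q == 0) && (b ^+ q ^+ q + (a + b) ^+ q == 0).
Proof.
have -> : a + (a + b) ^+ q = (a + b ^+ q ^+ q) + (b ^+ q ^+ q + (a + b) ^+ q).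
  by rewrite addrA (addrK_pchar2 pchar2_F).
by rewrite expr_q2; case: eqP => // ->; rewrite add0r.
Qed.

End FieldOfOrderQCubed.

Theorem mainTheorem4 (m : nat) (F : finFieldType) (a b c : F) :
  (1 <= m)%N ->
  #|F| = (2 ^ (3 * m))%N ->
  Lpoly (2 ^ m) a b c 1 = 0 ->
  let q := (2 ^ m)%N in
  #|[set x : F | (Tr q x == 0) && (Ladj q a b c x == 0)]| =
    (if Tr q (a ^+ q.+1 + a ^+ q * b + b ^+ q.+1) != 0 then 1%N
     else if (a + b ^+ (q ^ 2)%N == 0) && (a + c ^+ q == 0) then (q ^ 2)%N
     else q).
Proof.
move=> m_gt0 cardF /(Lpoly1_eq0 cardF) -> q.
rewrite /q (kerTr_Ladj cardF) (Tr_quadratic cardF) (Ladj_coef_eq0 cardF).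
exact: card_kerTr_adj m_gt0 cardF _ _.
Qed.
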